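(* Let $V_1,\dots,V_t$ be pairwise disjoint finite sets with $|V_i|\ge2$ for all $i$. For any integer $\ell\ge2$, the number of subsets $S\subseteq\bigcup_{i\in[t]}V_i$ with $|S|=\ell$ and $|S\cap V_i|\ne1$ for every $i\in[t]$ is at most $$\Big(\frac{20}{\ell}\big(|V_1|^2+\dots+|V_t|^2\big)\Big)^{\ell/2}.$$ *)

From HB Require Import structures.
From mathcomp Require Import all_boot all_order all_algebra.
From mathcomp Require Import all_classical all_reals all_analysis.
Set Implicit Arguments. Unset Strict Implicit. Unset Printing Implicit Defensive.
Import Order.TTheory GRing.Theory Num.Theory.
Local Open Scope ring_scope.

Definition good_count (T : finType) (t : nat) (V : 'I_t -> {set T}) (l : nat) : nat :=
  #|[set S : {set T} | (S \subset \bigcup_(i < t) V i) && (#|S| == l)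
      & [forall i : 'I_t, #|S :&: V i| != 1%N]]|.

(* For x >= 0, weighting each l-set by x^l and dropping the restrictions
   |S| = l and S = union of its traces S :&: V_i gives the product bound
     good_count * x^l <= prod_i ((1 + x)^|V_i| - |V_i| x) <= exp (x^2 sum_i |V_i|^2),
   the last step by (1 + x)^n - n x <= exp ((n x)^2).  Taking x = 2 / s with
   s^2 = 20 N / l (N = sum_i |V_i|^2) makes the exponent l/5 <= l/2, and
   exp (l/2) <= 2^l yields good_count <= s^l = (20 N / l)^(l/2). *)

From mathcomp Require Import all_boot all_order all_algebra.
From mathcomp Require Import all_classical all_reals all_analysis.
From mathcomp Require Import ring lra.
Import Order.TTheory GRing.Theory Num.Theory.
Local Open Scope ring_scope.

Section ExpBounds.
Variable R : realType.

Lemma expr1D_le_quadratic (x : R) (n : nat) : 0 <= x -> n%:R * x <= 1 ->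
  (1 + x) ^+ n <= 1 + n%:R * x + (n%:R * x) ^+ 2.
Proof.
move=> x0; elim: n => [|n IH] Hn; first by rewrite expr0 mul0r expr0n /= !addr0.
have Hn' : n%:R * x <= 1.
  by apply: le_trans Hn; rewrite ler_wpM2r // ler_nat.
rewrite exprS; apply: le_trans (ler_wpM2l _ (IH Hn')) _; first lra.
have n0 : (0 : R) <= n%:R by rewrite ler0n.
rewrite -natr1 in Hn *; nra.
Qed.

Lemma expr1D_subn_le_expR (x : R) (n : nat) : 0 <= x ->
  (1 + x) ^+ n - x *+ n <= expR ((n%:R * x) ^+ 2).
Proof.
move=> x0; have nx0 : 0 <= n%:R * x by rewrite mulr_ge0 // ler0n.
have [nx1|nx1] := lerP (n%:R * x) 1.
  apply: le_trans (expR_ge1Dx _).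
  have := @expr1D_le_quadratic x n x0 nx1; rewrite -mulr_natl; lra.
have le_expR : (1 + x) ^+ n <= expR (n%:R * x).
  rewrite expRM_natl; apply: lerXn2r; rewrite ?nnegrE ?expR_ge0 //; first lra.
  exact: expR_ge1Dx.
have : expR (n%:R * x) <= expR ((n%:R * x) ^+ 2) by rewrite ler_expR expr2; nra.
have : 0 <= x *+ n by rewrite mulrn_wge0.
lra.
Qed.

Lemma expR_half_natr_le (n : nat) : expR (n%:R / 2 : R) <= 2 ^+ n.
Proof.
rewrite expRM_natl; apply: lerXn2r; rewrite ?nnegrE ?expR_ge0 //.
(* exp (1/2) = 1 / exp (-1/2) <= 1 / (1 - 1/2) *)
have := @expRxMexpNx_1 R 2^-1; have := @expR_ge1Dx R (- 2^-1).
have := @expR_ge0 R 2^-1; have : (2 : R) * 2^-1 = 1 by field.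
nra.
Qed.

Lemma sqrtr_exprn_powR (b : R) (n : nat) : 0 <= b ->
  Num.sqrt b ^+ n = b `^ (n%:R / 2).
Proof.
move=> b0; rewrite -powR12_sqrt // -powR_mulrn ?powR_ge0 // -powRrM.
by rewrite mulrC.
Qed.

End ExpBounds.

Lemma ler_sum_subset {R : numDomainType} {I : finType} (A B : {pred I})
  (F : I -> R) : A \subset B -> (forall i, i \in B -> 0 <= F i) ->
  \sum_(i in A) F i <= \sum_(i in B) F i.
Proof.
move=> /fintype.subsetP sAB F0; rewrite [X in _ <= X](bigID (mem A)) /=.
rewrite [X in _ <= X + _](eq_bigl (mem A)); last first.
  by move=> i; apply/andP/idP => [[]//|Ai]; split => //; exact: sAB.
by rewrite lerDl sumr_ge0 // => i /andP[/F0].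
Qed.

Section SubsetSums.
Variables (R : comPzRingType) (T : finType) (x : R).

Lemma sum_subset_exprn (B : {set T}) :
  \sum_(A : {set T} | A \subset B) x ^+ #|A| = (1 + x) ^+ #|B|.
Proof.
rewrite addrC exprD1n.
rewrite (partition_big (fun A : {set T} => (inord #|A| : 'I_#|B|.+1)) xpredT) //=.
apply: eq_bigr => k _.
have cardA (A : {set T}) : A \subset B -> inord #|A| = k :> 'I_#|B|.+1 -> #|A| = k.
  by move=> sAB <-; rewrite inordK // ltnS (subset_leq_card sAB).
rewrite (eq_bigr (fun _ => x ^+ k)); last by move=> A /andP[sAB /eqP/cardA ->].
rewrite (eq_bigl [in [set A : {set T} | A \subset B & #|A| == k]]).
  by rewrite sumr_const cards_draws.
move=> A; rewrite inE; apply/andP/andP => -[sAB /eqP cA]; split => //.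
  by rewrite cardA.
by apply/eqP/val_inj; rewrite /= -cA inordK // ltnS (subset_leq_card sAB).
Qed.

Lemma sum_subset_card_neq1_exprn (B : {set T}) :
  \sum_(A : {set T} | (A \subset B) && (#|A| != 1%N)) x ^+ #|A| =
  (1 + x) ^+ #|B| - x *+ #|B|.
Proof.
have sum1 : \sum_(A : {set T} | (A \subset B) && (#|A| == 1%N)) x ^+ #|A| =
    x *+ #|B|.
  rewrite (eq_bigr (fun _ => x)); last by move=> A /andP[_ /eqP ->].
  rewrite (eq_bigl [in [set A : {set T} | A \subset B & #|A| == 1%N]]).
    by rewrite sumr_const cards_draws bin1.
  by move=> A; rewrite inE.
rewrite -sum_subset_exprn [in RHS](bigID (fun A : {set T} => #|A| == 1%N)) /=.
by rewrite sum1 addrC addrK.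
Qed.

End SubsetSums.

Lemma card_disjoint_cover {T I : finType} (V : I -> {set T})
  (Vdisj : forall i j, i != j -> [disjoint V i & V j]) (S : {set T}) :
  S \subset \bigcup_i V i -> #|S| = (\sum_i #|S :&: V i|)%N.
Proof.
move=> sSU; rewrite -sum1_card.
transitivity (\sum_(a in S) \sum_i ((a \in V i) : nat))%N.
  apply: eq_bigr => a aS.
  have /finset.bigcupP [j _ aVj] := fintype.subsetP sSU a aS.
  rewrite (bigD1 j) //= aVj big1 // => i ij.
  by rewrite (disjointFl (Vdisj i j ij) aVj).
rewrite exchange_big; apply: eq_bigr => i _.
rewrite -sum1_card big_mkcond [RHS]big_mkcond /=.
by apply: eq_bigr => a _; rewrite inE; case: (a \in S); case: (a \in V i).
Qed.

Section GoodCount.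
Context {R : realType} {T : finType} {t : nat} {V : 'I_t -> {set T}}.
Hypothesis Vdisj : forall i j : 'I_t, i != j -> [disjoint V i & V j].
Variable l : nat.

Lemma good_count_mul_exprn_le (x : R) : 0 <= x ->
  (good_count V l)%:R * x ^+ l <=
    \prod_(i < t) ((1 + x) ^+ #|V i| - x *+ #|V i|).
Proof.
move=> x0; rewrite /good_count; set G := [set S | _ ].
pose trace S := [ffun i : 'I_t => S :&: V i].
pose P i := [pred A : {set T} | (A \subset V i) && (#|A| != 1%N)].
have traceK S : S \in G -> S = \bigcup_i trace S i.
  rewrite inE => /andP[/andP[sSU _] _]; apply/finset.setP => a.
  apply/idP/finset.bigcupP => [aS | [i _]]; last by rewrite ffunE inE => /andP[].
  have /finset.bigcupP[j _ aVj] := fintype.subsetP sSU a aS.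
  by exists j; rewrite // ffunE inE aS aVj.
have trace_inj : {in G &, injective trace}.
  by move=> S1 S2 /traceK {2}-> /traceK {2}-> ->.
have sum_trace : \sum_(S in G) x ^+ l =
    \sum_(f in trace @: G) \prod_i x ^+ #|f i|.
  rewrite big_imset //; apply: eq_bigr => S.
  rewrite inE => /andP[/andP[sSU /eqP <-] _].
  rewrite prodrXr (card_disjoint_cover _ Vdisj _ sSU).
  by congr (_ ^+ _); apply: eq_bigr => i _; rewrite ffunE.
have trace_family : trace @: G \subset family P.
  apply/fintype.subsetP => _ /finset.imsetP[S + ->].
  rewrite inE => /andP[_ /forallP S1].
  by apply/familyP => i; rewrite ffunE inE subsetIr S1.
rewrite mulr_natl -sumr_const sum_trace.
apply: le_trans (ler_sum_subset _ _ _ trace_family _) _.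
  by move=> f _; apply: prodr_ge0 => i _; exact: exprn_ge0.
under [X in _ <= X]eq_bigr do rewrite -sum_subset_card_neq1_exprn.
by rewrite bigA_distr_big_dep.
Qed.

Lemma good_count_mul_exprn_le_expR (x : R) : 0 <= x ->
  (good_count V l)%:R * x ^+ l <= expR (x ^+ 2 * \sum_(i < t) (#|V i| ^ 2)%:R).
Proof.
move=> x0; apply: le_trans (good_count_mul_exprn_le x x0) _.
rewrite mulr_sumr expR_sum; apply: ler_prod => i _; apply/andP; split.
  by rewrite -sum_subset_card_neq1_exprn sumr_ge0 // => A _; exact: exprn_ge0.
by rewrite natrX -exprMn mulrC; exact: expr1D_subn_le_expR.
Qed.

Lemma good_count_le_exprn (s : R) : 0 < s ->
  8 * \sum_(i < t) (#|V i| ^ 2)%:R <= l%:R * s ^+ 2 ->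
  (good_count V l)%:R <= s ^+ l.
Proof.
move=> s0 hs; set N := \sum_(i < t) _ in hs.
have x0 : 0 < 2 / s by rewrite divr_gt0.
have exponent_le : (2 / s) ^+ 2 * N <= l%:R / 2.
  by rewrite expr_div_n mulrAC ler_pdivrMr ?exprn_gt0 //; nra.
rewrite -(ler_pM2r (exprn_gt0 l x0)) -exprMn mulrCA divff ?gt_eqF // mulr1.
apply: le_trans (good_count_mul_exprn_le_expR _ (ltW x0)) _.
by apply: le_trans (expR_half_natr_le R l); rewrite ler_expR.
Qed.

End GoodCount.

Theorem lemma6p4 (R : realType) (T : finType) (t : nat) (V : 'I_t -> {set T})
  (Hdisj : forall i j : 'I_t, i != j -> [disjoint V i & V j])
  (Hsize : forall i : 'I_t, (2 <= #|V i|)%N)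
  (l : nat) (Hl : (2 <= l)%N) :
  ((good_count V l)%:R : R) <=
    ((20 / l%:R) * (\sum_(i < t) (#|V i| ^ 2)%:R)) `^ (l%:R / 2).
Proof.
set N := \sum_(i < t) _.
have N0 : (0 : R) <= N by apply: sumr_ge0 => i _; rewrite ler0n.
have l0 : (0 : R) < l%:R by rewrite ltr0n (leq_trans _ Hl).
have [NE0|N_neq0] := eqVneq N 0.
  suff : ((good_count V l)%:R : R) < 1.
    by rewrite ltrn1 ltnS leqn0 => /eqP ->; rewrite powR_ge0.
  have half_lt1 : (2^-1 : R) < 1 by lra.
  apply: le_lt_trans (good_count_le_exprn Hdisj l (2^-1) _ _) _ => //.
    by rewrite -/N NE0 mulr0 mulr_ge0 ?ler0n ?exprn_ge0.
  by rewrite exprn_ilt1 // -lt0n (leq_trans _ Hl).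
have b0 : 0 <= 20 / l%:R * N by rewrite mulr_ge0 // divr_ge0 // ltW.
rewrite -sqrtr_exprn_powR //; apply: (good_count_le_exprn Hdisj l).
  by rewrite sqrtr_gt0 lt_def mulf_neq0 ?N_neq0 ?mulf_neq0 ?invr_eq0 ?gt_eqF.
by rewrite sqr_sqrtr // mulrA mulrCA divff ?gt_eqF // mulr1 -/N ler_wpM2r // ler_nat.
Qed.
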